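(* For every integer $n\geq 1$, $$\sum_{k=1}^{n-1}B_{2k}\bar B_{2n-2k}=\frac{1}{n+1}\sum_{k=1}^{n}B_{2k}B_{2n-2k}\,\frac{1-2^{2k-1}}{2^{2n-1}}\binom{2n+2}{2k+2}+(2n-1)\frac{B_{2n}}{2^{2n}}.$$
   Context: $B_n$ denotes the Bernoulli numbers, defined by $\frac{x}{e^x-1}=\sum_{n\ge 0}B_n\frac{x^n}{n!}$ (so $B_0=1$). $\bar B_n:=\frac{1-2^{n-1}}{2^{n-1}}B_n$. An empty sum equals $0$. *)

From mathcomp Require Import all_boot all_order all_algebra.
Set Implicit Arguments. Unset Strict Implicit. Unset Printing Implicit Defensive.
Import Order.TTheory GRing.Theory Num.Theory.
Local Open Scope ring_scope.

(* Bernoulli numbers with B_0 = 1, B_1 = -1/2 (the convention of x/(e^x-1)),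
   computed from the equivalent recurrence
     sum_{k=0}^{n} C(n+1,k) B_k = 0  for n >= 1,
   i.e. B_n = -1/(n+1) * sum_{k<n} C(n+1,k) B_k. *)
Definition bern_next (s : seq rat) : rat :=
  let n := size s in
  if n == 0%N then 1
  else - (n.+1%:R)^-1 * \sum_(k < n) ('C(n.+1, k))%:R * s`_k.

Fixpoint bern_upto (n : nat) : seq rat :=
  match n with
  | 0%N => [::]
  | m.+1 => let s := bern_upto m in rcons s (bern_next s)
  end.

Definition B (n : nat) : rat := (bern_upto n.+1)`_n.

Definition Bbar (n : nat) : rat :=
  (1 - 2 ^+ n.-1) / 2 ^+ n.-1 * B n.

Lemma B0 : B 0 = 1. Proof. by rewrite /B /= /bern_next /=. Qed.

From HB Require Import structures.
From mathcomp Require Import all_boot all_order all_algebra.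
From mathcomp Require Import ring lra zify.
Set Implicit Arguments.
Unset Strict Implicit.
Unset Printing Implicit Defensive.

Import Order.TTheory GRing.Theory Num.Theory.
Local Open Scope ring_scope.

(* Let L be the linear functional on polynomials sending X^i to B_i.  The
   recurrence defining the B_i says exactly that L(p(X+1) - p) = p'(0); hence
   the Bernoulli polynomials B_m(x) = L((x + X)^m) satisfy
   B_m(x+1) - B_m(x) = m x^(m-1), every polynomial is a forward difference, and
   any linear functional killing forward differences is zero.  Applied to
   suitable functionals this gives B_m = 0 for odd m > 1 and
   B_m(1/2) = (2^(1-m) - 1) B_m.
   The polynomial U_N(x) = sum_k B_k(x) B_(N-k)(x + 1/2) satisfies
   U_N' = (N+1) U_(N-1), and by the addition theorem for B_m, U_N(x + 1/2) - U_N(x)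
   is an explicit combination of powers of x with coefficients
   C(N+1, i+2) B_i(1/2).  Evaluating p |-> L(p(X/2)) on this difference gives a
   convolution identity for B_k B_(M-k)(1/2); for M = 2n its odd terms vanish,
   and inserting the values B_m(1/2) turns it into the theorem. *)

Lemma size_bern_upto n : size (bern_upto n) = n.
Proof. by elim: n => //= n IHn; rewrite size_rcons IHn. Qed.

Lemma nth_bern_upto m k : (k < m)%N -> (bern_upto m)`_k = B k.
Proof.
elim: m => // m IHm; rewrite ltnS leq_eqVlt => /orP[/eqP-> //|ltkm].
by rewrite /= nth_rcons size_bern_upto ltkm IHm.
Qed.

Lemma B_bern_next m : B m = bern_next (bern_upto m).
Proof. by rewrite /B /= nth_rcons size_bern_upto ltnn eqxx. Qed.

Lemma sum_binB_eq0 m : (0 < m)%N -> \sum_(k < m.+1) 'C(m.+1, k)%:R * B k = 0.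
Proof.
case: m => // m _; rewrite big_ord_recr /= binSn.
have -> : B m.+1 = - (m.+2%:R)^-1 * \sum_(k < m.+1) 'C(m.+2, k)%:R * B k.
  rewrite B_bern_next /bern_next size_bern_upto.
  by congr (_ * _); apply: eq_bigr => k _; rewrite nth_bern_upto.
by rewrite mulrA mulrN mulfV ?pnatr_eq0 // mulN1r subrr.
Qed.

Definition umbral (p : {poly rat}) : rat := \sum_(i < size p) p`_i * B i.

Lemma umbralE N (p : {poly rat}) :
  (size p <= N)%N -> umbral p = \sum_(i < N) p`_i * B i.
Proof.
move=> leN; rewrite /umbral (big_ord_widen N (fun i => p`_i * B i) leN).
rewrite big_mkcond /=; apply: eq_bigr => i _; case: ltnP => // lei.
by rewrite nth_default // mul0r.
Qed.

Lemma umbralZ a p : umbral (a *: p) = a * umbral p.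
Proof.
rewrite (umbralE (size_scale_leq a p)) /umbral mulr_sumr.
by apply: eq_bigr => i _; rewrite coefZ mulrA.
Qed.

Lemma umbralD p q : umbral (p + q) = umbral p + umbral q.
Proof.
pose N := maxn (size p) (size q).
rewrite (umbralE (size_add p q)) (umbralE (leq_maxl _ _ : _ <= N)%N).
rewrite (umbralE (leq_maxr _ _ : _ <= N)%N) -big_split /=.
by apply: eq_bigr => i _; rewrite coefD mulrDl.
Qed.

HB.instance Definition _ :=
  GRing.isSemilinear.Build rat {poly rat} rat _ umbral (umbralZ, umbralD).

Lemma umbral_Xn n : umbral 'X^n = B n.
Proof.
rewrite (umbralE (eq_leq (size_polyXn _ n))) big_ord_recr /= big1.
  by rewrite coefXn eqxx mul1r add0r.
by move=> i _; rewrite coefXn ltn_eqF ?mul0r.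
Qed.

Lemma umbral_CaddX_exp c n :
  umbral ((c%:P + 'X) ^+ n) = \sum_(j < n.+1) 'C(n, j)%:R * c ^+ (n - j) * B j.
Proof.
rewrite exprDn raddf_sum; apply: eq_bigr => j _.
rewrite -polyC_exp mul_polyC -scaler_nat scalerA.
by rewrite /= umbralZ umbral_Xn mulrC.
Qed.

Definition shiftX (a : rat) : {poly rat} := 'X + a%:P.

Definition fdiff (q : {poly rat}) := q \Po shiftX 1 - q.

Lemma umbral_fdiff p : umbral (fdiff p) = p^`().[0].
Proof.
have umbral_fdiff_Xn i : umbral (fdiff 'X^i) = ('X^i)^`().[0].
  rewrite /fdiff comp_Xn_poly /shiftX (addrC 'X) raddfB /= umbral_CaddX_exp umbral_Xn.
  rewrite big_ord_recr /= binn subnn mulr1 mul1r addrK derivXn hornerMn hornerXn.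
  under eq_bigr do rewrite expr1n mulr1.
  case: i => [|[|i]]; first by rewrite big_ord0.
    by rewrite big_ord1 bin0 expr0.
  by rewrite expr0n mul0rn; apply: sum_binB_eq0.
rewrite -[p]coefK poly_def /fdiff.
rewrite (raddf_sum (comp_poly (shiftX 1))) -sumrB !raddf_sum horner_sum /=.
apply: eq_bigr => i _.
by rewrite comp_polyZ -scalerBr umbralZ derivZ hornerZ umbral_fdiff_Xn.
Qed.

Lemma poly_horner_ext (R : numDomainType) (p q : {poly R}) :
  (forall x, p.[x] = q.[x]) -> p = q.
Proof.
move=> eqpq; apply/eqP; rewrite -subr_eq0; apply/eqP.
apply: (@roots_geq_poly_eq0 _ _ [seq i%:R | i <- iota 0 (size (p - q))]).
- by apply/allP => x /mapP[i _ ->]; rewrite /root hornerD hornerN eqpq subrr.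
- by rewrite map_inj_uniq ?iota_uniq // => i j /eqP; rewrite eqr_nat => /eqP.
- by rewrite size_map size_iota.
Qed.

Lemma comp_shiftX p a b : (p \Po shiftX a) \Po shiftX b = p \Po shiftX (a + b).
Proof.
rewrite -comp_polyA /shiftX comp_polyD comp_polyX comp_polyC.
by rewrite -addrA -polyCD (addrC b).
Qed.

Lemma horner_comp_shiftX p a x : (p \Po shiftX a).[x] = p.[x + a].
Proof. by rewrite horner_comp /shiftX hornerD hornerX hornerC. Qed.

Lemma deriv_comp_shiftX p a : (p \Po shiftX a)^`() = p^`() \Po shiftX a.
Proof. by rewrite deriv_comp /shiftX derivD derivX derivC addr0 mulr1. Qed.

Lemma fdiffZ c q : fdiff (c *: q) = c *: fdiff q.
Proof. by rewrite /fdiff comp_polyZ scalerBr. Qed.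

Lemma comp_shiftX_fdiff q a : fdiff q \Po shiftX a = fdiff (q \Po shiftX a).
Proof. by rewrite /fdiff comp_polyB !comp_shiftX (addrC 1). Qed.

Definition bernpoly m : {poly rat} :=
  \sum_(j < m.+1) ('C(m, j)%:R * B j) *: 'X^(m - j).

Lemma horner_bernpoly m x : (bernpoly m).[x] = umbral ((x%:P + 'X) ^+ m).
Proof.
rewrite umbral_CaddX_exp /bernpoly horner_sum; apply: eq_bigr => j _.
by rewrite hornerZ hornerXn mulrAC.
Qed.

Lemma bernpoly0 : bernpoly 0 = 1.
Proof. by rewrite /bernpoly big_ord1 /= B0 mul1r scale1r expr0. Qed.

Lemma bernpoly_at0 m : (bernpoly m).[0] = B m.
Proof. by rewrite horner_bernpoly add0r umbral_Xn. Qed.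

Lemma umbral_comp_shiftX1 p : umbral (p \Po shiftX 1) = umbral p + p^`().[0].
Proof. by rewrite -umbral_fdiff /fdiff raddfB /= addrC subrK. Qed.

Lemma bernpolyD1 m x : (bernpoly m).[x + 1] = (bernpoly m).[x] + m%:R * x ^+ m.-1.
Proof.
have shift1 : ((x + 1)%:P + 'X) ^+ m = (x%:P + 'X) ^+ m \Po shiftX 1.
  by rewrite rmorphXn /= /shiftX comp_polyD comp_polyC comp_polyX polyCD addrAC addrA.
rewrite !horner_bernpoly shift1 umbral_comp_shiftX1 deriv_exp derivD derivC derivX.
by rewrite add0r mul1r hornerMn horner_exp hornerD hornerC hornerX addr0 mulr_natl.
Qed.

Lemma bernpolyD m y h :
  (bernpoly m).[y + h] = \sum_(i < m.+1) 'C(m, i)%:R * (bernpoly i).[h] * y ^+ (m - i).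
Proof.
rewrite horner_bernpoly polyCD -addrA exprDn raddf_sum; apply: eq_bigr => i _.
rewrite -polyC_exp mul_polyC -scaler_nat scalerA /= umbralZ -horner_bernpoly.
by rewrite mulrAC.
Qed.

Lemma deriv_bernpoly m : (bernpoly m)^`() = bernpoly m.-1 *+ m.
Proof.
rewrite /bernpoly raddf_sum /=.
case: m => [|m]; first by rewrite big_ord1 derivZ derivXn /= mulr0n scaler0 mulr0n.
rewrite big_ord_recr /= subnn derivZ derivXn mulr0n scaler0 addr0 -sumrMnl.
apply: eq_bigr => j _; rewrite derivZ derivXn -!scaler_nat !scalerA.
congr (_ *: _); last by rewrite subSn ?leq_ord.
by rewrite mulrC mulrA -natrM -mul_bin_down natrM mulrA.
Qed.

Lemma fdiff_bernpoly m : fdiff (bernpoly m.+1) = m.+1%:R *: 'X^m.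
Proof.
apply: poly_horner_ext => x; rewrite /fdiff hornerD hornerN horner_comp_shiftX.
by rewrite bernpolyD1 hornerZ hornerXn addrAC subrr add0r.
Qed.

(* Every polynomial is a forward difference, so a map vanishing on forward
   differences vanishes on every monomial. *)
Lemma Xn_fdiff m : 'X^m = fdiff ((m.+1%:R)^-1 *: bernpoly m.+1).
Proof. by rewrite fdiffZ fdiff_bernpoly scalerA mulVf ?pnatr_eq0 // scale1r. Qed.

Lemma B_odd_eq0 m : odd m -> (1 < m)%N -> B m = 0.
Proof.
move=> odd_m gt1m.
(* [L (p \Po - 'X) = L (p \Po shiftX 1)] is the symmetry B_m(1 - x) = (-1)^m B_m(x) at x = 0. *)
pose reflect_gap p := umbral (p \Po - 'X) - umbral (p \Po shiftX 1).
have gap_fdiff q : reflect_gap (fdiff q) = 0.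
  pose w := q \Po (- 'X + 1%:P).
  have refl_fdiff : fdiff q \Po - 'X = - fdiff w.
    rewrite /fdiff /w comp_polyB opprB -!comp_polyA /shiftX.
    by rewrite !comp_polyD comp_polyX !comp_polyC raddfN /= comp_polyX opprD subrK.
  rewrite /reflect_gap comp_shiftX_fdiff refl_fdiff raddfN /= !umbral_fdiff.
  rewrite deriv_comp_shiftX horner_comp_shiftX add0r /w deriv_comp hornerM.
  rewrite derivD derivN derivX derivC addr0 hornerN hornerC mulrN1 opprK.
  by rewrite horner_comp hornerD hornerN hornerX hornerC oppr0 add0r subrr.
have := gap_fdiff ((m.+1%:R)^-1 *: bernpoly m.+1); rewrite -Xn_fdiff /reflect_gap.
rewrite [_ \Po - 'X]comp_Xn_poly exprNn -signr_odd odd_m expr1 mulN1r raddfN /= umbral_Xn.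
rewrite umbral_comp_shiftX1 umbral_Xn derivXn hornerMn hornerXn expr0n.
by case: m odd_m gt1m => [|[|m]] //= _ _; rewrite mul0rn addr0; lra.
Qed.

Local Notation half := (2^-1 : rat).

Definition umbral_half p := umbral (p \Po (half *: 'X)).

Lemma umbral_halfZ a p : umbral_half (a *: p) = a * umbral_half p.
Proof. by rewrite /umbral_half comp_polyZ umbralZ. Qed.

Lemma umbral_halfD p q : umbral_half (p + q) = umbral_half p + umbral_half q.
Proof. by rewrite /umbral_half comp_polyD umbralD. Qed.

HB.instance Definition _ :=
  GRing.isSemilinear.Build rat {poly rat} rat _ umbral_half
    (umbral_halfZ, umbral_halfD).

Lemma umbral_half_Xn n : umbral_half 'X^n = half ^+ n * B n.
Proof. by rewrite /umbral_half comp_Xn_poly exprZn umbralZ umbral_Xn. Qed.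

Lemma umbral_half_shift p : umbral_half (p \Po shiftX half - p) = p^`().[0] / 2.
Proof.
have shift_half : shiftX half \Po (half *: 'X) = (half *: 'X) \Po shiftX 1.
  rewrite /shiftX comp_polyD comp_polyX comp_polyC comp_polyZ comp_polyX.
  by rewrite scalerDr polyC1 alg_polyC.
rewrite raddfB /= /umbral_half -comp_polyA shift_half comp_polyA -raddfB /=.
rewrite umbral_fdiff deriv_comp hornerM derivZ derivX horner_comp.
by rewrite !hornerZ hornerX hornerC mulr0 mulr1.
Qed.

Lemma bernpoly_half m : (bernpoly m).[half] = (2 * half ^+ m - 1) * B m.
Proof.
(* Raabe's multiplication formula for the factor 2, integrated against L. *)
pose defect p := umbral p + umbral (p \Po shiftX half) - 2 * umbral_half p.
have defect_fdiff q : defect (fdiff q) = 0.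
  have split_fdiff : fdiff q =
      ((q \Po shiftX half) - q) + ((q \Po shiftX half \Po shiftX half) - (q \Po shiftX half)).
    have halfD : half + half = 1 by field.
    by rewrite comp_shiftX halfD [in RHS]addrC [in RHS]addrA subrK.
  rewrite /defect comp_shiftX_fdiff !umbral_fdiff split_fdiff raddfD /=.
  by rewrite !umbral_half_shift deriv_comp_shiftX horner_comp_shiftX add0r; field.
have := defect_fdiff ((m.+1%:R)^-1 *: bernpoly m.+1); rewrite -Xn_fdiff /defect.
rewrite umbral_Xn umbral_half_Xn comp_Xn_poly /shiftX (addrC 'X) -horner_bernpoly.
by move=> /eqP; rewrite subr_eq0 => /eqP; lra.
Qed.

Definition bern_conv N : {poly rat} :=
  \sum_(k < N.+1) bernpoly k * (bernpoly (N - k) \Po shiftX half).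

Lemma deriv_bern_conv N : (bern_conv N.+1)^`() = bern_conv N *+ N.+2.
Proof.
rewrite /bern_conv raddf_sum /=.
under eq_bigr do rewrite derivM deriv_comp_shiftX !deriv_bernpoly.
rewrite big_split /= big_ord_recl /= mulr0n mul0r add0r.
rewrite [X in _ + X]big_ord_recr /= subnn mulr0n comp_poly0 mulr0 addr0.
rewrite -sumrMnl -big_split /=; apply: eq_bigr => i _.
rewrite /bump /= add0n add1n subSS subSn ?leq_ord //= raddfMn /=.
rewrite mulrnAl mulrnAr -mulrnDr; congr (_ *+ _).
by rewrite addSn addnS addnC subnK // -ltnS.
Qed.

Lemma horner_bern_conv N x :
  (bern_conv N).[x] = \sum_(k < N.+1) (bernpoly k).[x] * (bernpoly (N - k)).[x + half].
Proof.
rewrite /bern_conv horner_sum.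
by apply: eq_bigr => k _; rewrite hornerM horner_comp_shiftX.
Qed.

Lemma horner_bern_conv_shift_half N x :
  (bern_conv N \Po shiftX half - bern_conv N).[x] =
  \sum_(k < N.+1) (bernpoly k).[x + half] * ((N - k)%:R * x ^+ (N - k).-1).
Proof.
have halfD : half + half = 1 by field.
rewrite hornerD hornerN horner_comp_shiftX !horner_bern_conv -addrA halfD.
under eq_bigr do rewrite bernpolyD1 mulrDr.
rewrite big_split /= -addrA addrCA [X in _ + X](_ : _ = 0) ?addr0 //.
apply/eqP; rewrite subr_eq0; apply/eqP; rewrite (reindex_inj rev_ord_inj) /=.
by apply: eq_bigr => k _; rewrite subKn ?leq_ord // mulrC.
Qed.

Lemma hockey_stick N i : (\sum_(k < N.+1) 'C(k, i) = 'C(N.+1, i.+1))%N.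
Proof.
elim: N => [|N IHN]; first by rewrite big_ord1; case: i.
by rewrite big_ord_recr /= IHN.
Qed.

Lemma sum_subn_mul_bin N i : (\sum_(k < N.+1) (N - k) * 'C(k, i) = 'C(N.+1, i.+2))%N.
Proof.
elim: N => [|N IHN]; first by rewrite big_ord1 mul0n bin_small.
rewrite big_ord_recr /= subnn mul0n addn0.
under eq_bigr => k _ do rewrite subSn ?leq_ord // mulSn.
by rewrite big_split /= IHN hockey_stick binS addnC.
Qed.

Lemma sum_bin_widen (R : pzSemiRingType) N k (F : nat -> R) : (k <= N)%N ->
  \sum_(i < k.+1) 'C(k, i)%:R * F i = \sum_(i < N.+1) 'C(k, i)%:R * F i.
Proof.
move=> lekN; rewrite (big_ord_widen N.+1 (fun i => 'C(k, i)%:R * F i)) ?ltnS //.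
rewrite big_mkcond /=; apply: eq_bigr => i _; case: ltnP => // ltki.
by rewrite bin_small ?mul0r.
Qed.

Lemma bern_conv_shift_half N :
  bern_conv N \Po shiftX half - bern_conv N =
  \sum_(i < N.+1) ('C(N.+1, i.+2)%:R * (bernpoly i).[half]) *: 'X^(N.-1 - i).
Proof.
apply: poly_horner_ext => x; rewrite horner_bern_conv_shift_half horner_sum.
have expand (k : 'I_N.+1) : (bernpoly k).[x + half] =
    \sum_(i < N.+1) 'C(k, i)%:R * ((bernpoly i).[half] * x ^+ (k - i)).
  rewrite bernpolyD -(sum_bin_widen (fun i => (bernpoly i).[half] * x ^+ (k - i)) (leq_ord k)).
  by apply: eq_bigr => i _; rewrite mulrA.
under eq_bigr do rewrite expand mulr_suml.
rewrite exchange_big /=; apply: eq_bigr => i _.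
rewrite hornerZ hornerXn -sum_subn_mul_bin natr_sum !mulr_suml; apply: eq_bigr => k _.
have [ltki|leik] := ltnP k i; first by rewrite bin_small // muln0 !mul0r.
have [ltkN|leNk] := ltnP k N; last first.
  by rewrite (_ : N - k = 0)%N ?mul0n ?mul0r ?mulr0 //; apply/eqP; rewrite subn_eq0 -ltnS.
by rewrite (_ : N.-1 - i = (k - i) + (N - k).-1)%N ?exprD ?natrM; [ring | lia].
Qed.

Lemma bern_half_convolution M :
  M.+2%:R * \sum_(0 <= k < M.+1) B k * (bernpoly (M - k)).[half] =
  2 * \sum_(0 <= i < M.+1)
        'C(M.+2, i.+2)%:R * (bernpoly i).[half] * (half ^+ (M - i) * B (M - i)).
Proof.
rewrite !big_mkord; have := umbral_half_shift (bern_conv M.+1).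
rewrite bern_conv_shift_half deriv_bern_conv raddf_sum big_ord_recr /= bin_small //.
rewrite mul0r scale0r raddf0 addr0.
under eq_bigr do rewrite umbral_halfZ umbral_half_Xn.
rewrite hornerMn horner_bern_conv => ->.
under [in RHS]eq_bigr do rewrite bernpoly_at0 add0r.
by rewrite -mulr_natl; field.
Qed.

Lemma sum_even_odd (V : nmodType) (F : nat -> V) n :
  \sum_(0 <= k < (2 * n).+1) F k =
  \sum_(0 <= i < n.+1) F (2 * i)%N + \sum_(0 <= i < n) F (2 * i).+1.
Proof.
elim: n => [|n IHn]; first by rewrite muln0 !big_nat1 big_geq // addr0.
rewrite (_ : (2 * n.+1).+1 = (2 * n).+3)%N; last lia.
rewrite 2?big_nat_recr //= IHn (big_nat_recr n.+1) //= [X in _ = _ + X]big_nat_recr //=.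
rewrite (_ : 2 * n.+1 = (2 * n).+2)%N; last lia.
by rewrite -!addrA; congr (_ + _); rewrite [F (2 * n).+2 + _]addrC !addrA.
Qed.

Lemma bernpoly_half_odd m : odd m -> (bernpoly m).[half] = 0.
Proof.
move=> odd_m; rewrite bernpoly_half.
case: m odd_m => [|[|m]] odd_m //; last by rewrite B_odd_eq0 ?mulr0.
by rewrite expr1 mulfV ?subrr ?mul0r.
Qed.

Lemma bernpoly_half_Bbar m : (0 < m)%N -> (bernpoly m).[half] = Bbar m.
Proof.
case: m => // m _; rewrite bernpoly_half /Bbar /= exprVn exprS.
by field; rewrite expf_neq0.
Qed.

Lemma bern_half_convolution_even n :
  (2 * n).+2%:R * \sum_(0 <= i < n.+1) B (2 * i) * (bernpoly (2 * n - 2 * i)).[half] =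
  2 * \sum_(0 <= i < n.+1) 'C((2 * n).+2, (2 * i).+2)%:R * (bernpoly (2 * i)).[half]
        * (half ^+ (2 * n - 2 * i) * B (2 * n - 2 * i)).
Proof.
have := bern_half_convolution (2 * n).
rewrite !(sum_even_odd (fun k => _ * _)) [X in _ * (_ + X)]big1_seq ?addr0.
  rewrite [X in _ = _ * (_ + X)]big1 ?addr0 // => i _.
  by rewrite bernpoly_half_odd ?mulr0 ?mul0r //= oddM.
move=> i; rewrite mem_index_iota => /andP[_ ltin].
by rewrite bernpoly_half_odd ?mulr0 // oddB ?oddM //=; lia.
Qed.

Lemma bern_half_convolution_tailE n :
  \sum_(1 <= k < n.+1) 'C((2 * n).+2, (2 * k).+2)%:R * (bernpoly (2 * k)).[half]
    * (half ^+ (2 * n - 2 * k) * B (2 * n - 2 * k)) =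
  \sum_(1 <= k < n.+1) B (2 * k) * B (2 * n - 2 * k)
    * ((1 - 2 ^+ (2 * k).-1) / 2 ^+ (2 * n).-1) * 'C(2 * n + 2, 2 * k + 2)%:R.
Proof.
apply: eq_big_nat => k /andP[k_gt0 le_kn].
have exp_n : (2 : rat) ^+ (2 * n).-1 = 2 ^+ (2 * k).-1 * 2 ^+ (2 * n - 2 * k).
  by rewrite -exprD; congr (_ ^+ _); lia.
have exp_k : (2 : rat) ^+ (2 * k) = 2 * 2 ^+ (2 * k).-1.
  by rewrite -exprS; congr (_ ^+ _); lia.
rewrite bernpoly_half !exprVn exp_n exp_k !addn2.
by field; rewrite ?expf_neq0.
Qed.

Theorem mainTheorem10 (n : nat) (hn : (1 <= n)%N) :
  \sum_(1 <= k < n) B (2 * k) * Bbar (2 * n - 2 * k)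
  = (n.+1%:R)^-1 *
      \sum_(1 <= k < n.+1)
        B (2 * k) * B (2 * n - 2 * k)
        * ((1 - 2 ^+ (2 * k).-1) / 2 ^+ (2 * n).-1)
        * ('C(2 * n + 2, 2 * k + 2))%:R
    + (2 * n).-1%:R * (B (2 * n) / 2 ^+ (2 * n)).
Proof.
have := bern_half_convolution_even n.
rewrite big_ltn // big_nat_recr // [in RHS]big_ltn //= !muln0 subn0 subnn B0.
rewrite bernpoly0 hornerC mulr1 bernpoly_half.
have -> : \sum_(1 <= i < n) B (2 * i) * (bernpoly (2 * n - 2 * i)).[half] =
          \sum_(1 <= k < n) B (2 * k) * Bbar (2 * n - 2 * k).
  by apply: eq_big_nat => k /andP[_ ltkn]; rewrite bernpoly_half_Bbar //; lia.
rewrite bern_half_convolution_tailE.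
set S := \sum_(1 <= k < n) _; set T := \sum_(1 <= k < n.+1) _ => conv.
have binE : 'C((2 * n).+2, 2)%:R = n.+1%:R * (2 * n%:R + 1) :> rat.
  rewrite bin2 (_ : _ * _ = (n.+1 * (2 * n).+1).*2)%N ?doubleK; last by rewrite -mul2n; lia.
  by rewrite natrM -[(2 * n).+1%:R]natr1 natrM.
have oddE : (2 * n).-1%:R = 2 * n%:R - 1 :> rat.
  by rewrite -subn1 natrB ?natrM //; lia.
have evenE : (2 * n).+2%:R = 2 * n.+1%:R :> rat by rewrite -natrM; congr _%:R; lia.
have SE : S = 2 * ('C((2 * n).+2, 2)%:R * (half ^+ (2 * n) * B (2 * n)) + T)
              / (2 * n).+2%:R - 2 * half ^+ (2 * n) * B (2 * n).
  by rewrite -conv evenE; field; rewrite nat1r pnatr_eq0.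
rewrite SE binE oddE evenE exprVn -natr1.
by field; rewrite expf_neq0 // nat1r pnatr_eq0.
Qed.
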